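(* Fix an integer $m\geq 2$. Let $\Gamma$ be a distance-regular graph with smallest eigenvalue at least $-m$, valency $k\ge 2$, diameter $D\ge 2$ and intersection number $a_1$. Then $k< m(a_1+m)$.
   Context: A finite connected graph $\Gamma$ with diameter $D$ is distance-regular if there are integers $b_i,c_i$ ($0\le i\le D$) such that for any vertices $x,y$ with $d(x,y)=i$, exactly $c_i$ neighbours of $y$ are at distance $i-1$ from $x$ and exactly $b_i$ neighbours of $y$ are at distance $i+1$ from $x$; its valency is $k=b_0$ and $a_i:=k-b_i-c_i$ (so $a_1$ is the number of common neighbours of two adjacent vertices). The smallest eigenvalue is that of the adjacency matrix. *)

From mathcomp Require Import all_boot all_order all_algebra.
From mathcomp Require Import algC.
Set Implicit Arguments. Unset Strict Implicit. Unset Printing Implicit Defensive.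
Import Order.TTheory GRing.Theory Num.Theory.

Section Graphs.
Variable T : finType.
Variable e : rel T.

Definition simple_graph := symmetric e /\ irreflexive e.

Fixpoint ball (n : nat) (x : T) : {set T} :=
  match n with
  | 0 => [set x]
  | n'.+1 => ball n' x :|: [set z | [exists y in ball n' x, e y z]]
  end.

Definition connected_graph := forall x y : T, y \in ball #|T| x.

(* graph distance (the least n with y in ball n x; meaningful when connected) *)
Definition dist (x y : T) : nat :=
  find (fun n => y \in ball n x) (iota 0 #|T|.+1).

Definition diameter : nat := \max_(x : T) \max_(y : T) dist x y.

Definition regular_of_valency (k : nat) := forall x : T, #|[set z | e x z]| = k.

Definition a1_number (a1 : nat) :=
  forall x y : T, e x y -> #|[set z | e x z & e y z]| = a1.

Definition distance_regular :=
  [/\ simple_graph, connected_graph &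
   exists b c : nat -> nat, forall (i : nat) (x y : T), dist x y = i ->
     #|[set z | e y z & dist x z == i.-1]| = c i /\
     #|[set z | e y z & dist x z == i.+1]| = b i].

Definition adjmx : 'M[algC]_#|T| :=
  \matrix_(i, j) ((e (enum_val i) (enum_val j))%:R : algC)%R.

End Graphs.

From mathcomp Require Import all_boot all_order all_algebra.
From mathcomp Require Import algC ring.
Set Implicit Arguments. Unset Strict Implicit. Unset Printing Implicit Defensive.
Import Order.TTheory GRing.Theory Num.Theory.
Local Open Scope ring_scope.

(* Since D >= 2 there are vertices x0, y0 at distance 2; let N be the
   neighbourhood of x0 and c >= 1 the number of common neighbours of x0 and y0.
   As the smallest eigenvalue is at least -m, the matrix A + m I is positive
   semidefinite, so its quadratic form is nonnegative at the test vector
   f = k e_x0 - m 1_N + c e_y0.  Counting edges between x0, N and y0 evaluates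
   this form to m (k m (a1 + m) - k^2 - c^2), hence k^2 < k^2 + c^2 <= k m (a1 + m). *)

Section HermitianForm.
Local Open Scope sesquilinear_scope.

Lemma hermitian_form_ge0 (C : numClosedFieldType) (n : nat) (A : 'M[C]_n) (c : C) :
  A \is hermsymmx -> (forall t, eigenvalue A t -> - c <= t) ->
  forall v : 'rV_n, 0 <= (v *m A *m v^t*) 0 0 + c * (v *m v^t*) 0 0.
Proof.
move=> hA hev v.
have /orthomx_spectralP Ae := hermitian_normalmx hA.
set P := spectralmx A in Ae; set d := spectral_diag A in Ae.
have Pu : P \is unitarymx by apply: spectral_unitarymx.
have Punit : P \in unitmx by apply: spectral_unit.
have ev i : eigenvalue A (d 0 i).
  apply/eigenvalueP; exists (delta_mx 0 i *m P).
    rewrite [in LHS]Ae !mulmxA mulmxK // -[_ *m diag_mx d]rowE row_diag_mx -scalemxAl //.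
  apply/eqP => /(congr1 (mulmx^~ (invmx P))); rewrite mulmxK // mul0mx.
  by move/matrixP/(_ 0 i); rewrite !mxE !eqxx /= => /eqP; rewrite oner_eq0.
set w := v *m P^t*.
have wE : w^t* = P *m v^t* by rewrite /w trmx_mul map_mxM trmxCK.
have formE : v *m A *m v^t* = w *m diag_mx d *m w^t*.
  by rewrite wE Ae invmx_unitary // !mulmxA.
have normE : v *m v^t* = w *m w^t*.
  by rewrite wE mulmxA /w -(mulmxA v) -invmx_unitary // mulVmx // mulmx1.
rewrite formE normE !mxE mulr_sumr -big_split /=.
apply: sumr_ge0 => i _.
rewrite mul_mx_diag !mxE mulrAC (mulrC c) -mulrDr.
apply: mulr_ge0; first exact: mul_conjC_ge0.
by rewrite -[c]opprK subr_ge0 hev.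
Qed.

End HermitianForm.

Section Sums.
Variables (T : finType) (R : comNzRingType).

Lemma sum_indicator_in (S : {set T}) (P : pred T) :
  \sum_(x in S) ((P x)%:R : R) = #|[set x in S | P x]|%:R.
Proof.
rewrite -sum1_card natr_sum [RHS]big_mkcond [LHS]big_mkcond /=.
by apply: eq_bigr => x _; rewrite inE; case: (x \in S); case: (P x).
Qed.

Lemma sum_delta_indicator (x0 y0 : T) (S : {set T}) (a b d : R) (F : T -> R) :
  \sum_x (a * (x == x0)%:R - b * (x \in S)%:R + d * (x == y0)%:R) * F x =
  a * F x0 - b * \sum_(x in S) F x + d * F y0.
Proof.
have delta z : \sum_x ((x == z)%:R : R) * F x = F z.
  by rewrite (bigD1 z) //= eqxx mul1r big1 ?addr0 // => x /negbTE ->; rewrite mul0r.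
rewrite (eq_bigr (fun x => a * ((x == x0)%:R * F x) - b * ((x \in S)%:R * F x)
                          + d * ((x == y0)%:R * F x))); last by move=> x _; ring.
rewrite big_split sumrB /= -!mulr_sumr !delta [in RHS]big_mkcond /=.
by congr (_ - b * _ + _); apply: eq_bigr => x _; case: (x \in S); rewrite ?mul1r ?mul0r.
Qed.

End Sums.

Section AdjacencyForm.
Local Open Scope sesquilinear_scope.
Variables (T : finType) (e : rel T).
Hypothesis e_sym : symmetric e.

Lemma adjmx_hermsym : adjmx e \is hermsymmx.
Proof.
apply: realsym_hermsym; last by apply/mxOverP => i j; rewrite mxE realn.
by apply/is_hermitianmxP; rewrite expr0 scale1r; apply/matrixP => i j; rewrite !mxE e_sym.
Qed.

Lemma adj_form_ge0 (c : algC) :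
  (forall t, eigenvalue (adjmx e) t -> - c <= t) ->
  forall f : T -> algC, (forall x, f x \is Num.real) ->
  0 <= \sum_y (\sum_x f x * (e x y)%:R) * f y + c * \sum_x f x ^+ 2.
Proof.
move=> ev_ge f f_real; pose v : 'rV_#|T| := \row_i f (enum_val i).
have vC : v^t* = v^T by apply/matrixP => i j; rewrite !mxE conj_Creal.
have sum_enum (F : T -> algC) : \sum_(i < #|T|) F (enum_val i) = \sum_x F x.
  by rewrite -(big_enum_val F).
have := hermitian_form_ge0 adjmx_hermsym ev_ge v.
rewrite vC !mxE -(sum_enum (fun y => (\sum_x f x * (e x y)%:R) * f y)).
rewrite -(sum_enum (fun x => f x ^+ 2)).
congr (0 <= _ + c * _); apply: eq_bigr => j _; rewrite !mxE ?expr2 //.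
by rewrite -sum_enum; congr (_ * _); apply: eq_bigr => i _; rewrite !mxE.
Qed.

End AdjacencyForm.

Section TestVector.
Variables (T : finType) (e : rel T) (k a1 m : nat) (x0 y0 : T).
Hypotheses (e_sym : symmetric e) (e_irr : irreflexive e).
Hypotheses (e_reg : regular_of_valency e k) (e_a1 : a1_number e a1).
Hypotheses (neq_x0y0 : x0 != y0) (nadj_x0y0 : ~~ e x0 y0).

Let N := [set y | e x0 y].
Let c := #|[set y in N | e y0 y]|.

Definition test_vector (x : T) : algC :=
  k%:R * (x == x0)%:R - m%:R * (x \in N)%:R + c%:R * (x == y0)%:R.

Let x0_notin_N : x0 \notin N.
Proof. by rewrite inE e_irr. Qed.

Let y0_notin_N : y0 \notin N.
Proof. by rewrite inE. Qed.

Let card_N : #|N| = k.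
Proof. by rewrite -(e_reg x0). Qed.

Lemma test_vector_real x : test_vector x \is Num.real.
Proof. by rewrite ?(rpredD, rpredN, rpredM, realn). Qed.

Lemma test_vector_sq_sum :
  \sum_x test_vector x ^+ 2 = (k * k + m * m * k + c * c)%:R.
Proof.
have test_vector_N x : x \in N -> test_vector x = - m%:R.
  move=> xN; have /memPn/(_ x xN)/negbTE nx0 := x0_notin_N.
  have /memPn/(_ x xN)/negbTE ny0 := y0_notin_N.
  by rewrite /test_vector xN nx0 ny0 /=; ring.
under eq_bigr do rewrite expr2.
rewrite sum_delta_indicator (eq_bigr _ test_vector_N) sumr_const card_N.
rewrite /test_vector eqxx (negbTE x0_notin_N) (negbTE neq_x0y0).
rewrite eq_sym (negbTE neq_x0y0) (negbTE y0_notin_N) eqxx.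
by rewrite /= !natrD !natrM -mulr_natr; ring.
Qed.

Lemma test_vector_adj y :
  \sum_x test_vector x * (e x y)%:R =
  k%:R * (e x0 y)%:R - m%:R * #|[set x in N | e x y]|%:R + c%:R * (e y0 y)%:R.
Proof. by rewrite sum_delta_indicator sum_indicator_in. Qed.

Lemma test_vector_form :
  \sum_y (\sum_x test_vector x * (e x y)%:R) * test_vector y
    + m%:R * \sum_x test_vector x ^+ 2
  = m%:R * ((k * (m * (a1 + m)))%:R - (k * k + c * c)%:R).
Proof.
have adj_x0 : [set x in N | e x x0] = N.
  by apply/setP => x; rewrite !inE e_sym andbb.
have adj_y0 : [set x in N | e x y0] = [set y in N | e y0 y].
  by apply/setP => x; rewrite !inE (e_sym x).
have adj_N y : y \in N -> #|[set x in N | e x y]| = a1.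
  rewrite inE => /e_a1 <-.
  by apply: eq_card => x; rewrite !inE (e_sym x).
have sum_adj_N : \sum_(y in N) \sum_x test_vector x * (e x y)%:R =
    (k * k)%:R - (m * a1 * k)%:R + (c * c)%:R.
  rewrite (eq_bigr (fun y => (k%:R - m%:R * a1%:R) + c%:R * (e y0 y)%:R)); last first.
    move=> y yN; have e_x0y : e x0 y by rewrite inE in yN.
    by rewrite test_vector_adj adj_N // e_x0y mulr1.
  rewrite big_split /= sumr_const card_N -mulr_sumr sum_indicator_in.
  by rewrite -mulr_natr !natrM; ring.
rewrite test_vector_sq_sum (eq_bigr _ (fun y _ => mulrC _ (test_vector y))).
rewrite sum_delta_indicator sum_adj_N !test_vector_adj adj_x0 adj_y0 card_N.
rewrite !e_irr (negbTE nadj_x0y0) (e_sym y0) (negbTE nadj_x0y0).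
by rewrite /= !natrD !natrM; ring.
Qed.

End TestVector.

Section Path2Closed.
Variables (T : finType) (e : rel T).
Hypothesis e_path2_closed : forall x y z, e x z -> e z y -> x = y \/ e x y.

Lemma mem_ball_eq_or_adj n x y : y \in ball e n x -> (y == x) || e x y.
Proof.
elim: n y => [|n IHn] y /=; first by rewrite in_set1 => ->.
rewrite in_setU inE => /orP [/IHn // | /existsP [w /andP [/IHn w_x e_wy]]].
case/orP: w_x => [/eqP <- | e_xw]; first by rewrite e_wy orbT.
by case: (e_path2_closed e_xw e_wy) => [-> | ->]; rewrite ?eqxx ?orbT.
Qed.

Lemma diameter_le1 : connected_graph e -> (diameter e <= 1)%N.
Proof.
move=> e_conn; apply/bigmax_leqP => x _; apply/bigmax_leqP => y _.
have y_ball1 : y \in ball e 1 x.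
  rewrite /= in_setU in_set1 inE.
  case/orP: (mem_ball_eq_or_adj (e_conn x y)) => [-> // | e_xy].
  by apply/orP; right; apply/existsP; exists x; rewrite in_set1 eqxx.
rewrite leqNgt; apply/negP => /(before_find 0).
rewrite nth_iota ?y_ball1 // ltnS; apply/card_gt0P; by exists x.
Qed.

End Path2Closed.

Lemma induced_path2_of_diameter (T : finType) (e : rel T) :
  connected_graph e -> (1 < diameter e)%N ->
  exists x y z, [/\ e x z, e z y, x != y & ~~ e x y].
Proof.
move=> e_conn diam_gt1.
case: (boolP [exists x, exists y, exists z, [&& e x z, e z y, x != y & ~~ e x y]]).
  case/existsP => x /existsP [y /existsP [z /and4P [e_xz e_zy nxy nexy]]].
  by exists x, y, z.
move=> /existsPn no_path2.
suff: (diameter e <= 1)%N by rewrite leqNgt diam_gt1.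
apply: diameter_le1 e_conn => x y z e_xz e_zy.
case: (eqVneq x y) => [-> | nxy]; [by left | right].
move: (no_path2 x) => /existsPn/(_ y)/existsPn/(_ z).
by rewrite e_xz e_zy nxy /= => /negbNE.
Qed.

Theorem lemma3p2 (m : nat) (T : finType) (e : rel T) (k D a1 : nat) :
  (2 <= m)%N ->
  distance_regular e ->
  (forall theta : algC, eigenvalue (adjmx e) theta -> - (m%:R) <= theta) ->
  regular_of_valency e k -> (2 <= k)%N ->
  diameter e = D -> (2 <= D)%N ->
  a1_number e a1 ->
  (k < m * (a1 + m))%N.
Proof.
move=> m_ge2 [[e_sym e_irr] e_conn _] ev_ge e_reg k_ge2 <- diam_ge2 e_a1.
have [x0 [y0 [z [e_x0z e_zy0 neq_x0y0 nadj_x0y0]]]] :=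
  induced_path2_of_diameter e_conn diam_ge2.
set c := #|[set y in [set y | e x0 y] | e y0 y]|.
have c_gt0 : (0 < c)%N by apply/card_gt0P; exists z; rewrite !inE e_x0z e_sym.
have := adj_form_ge0 e_sym ev_ge (test_vector_real e k m x0 y0).
rewrite (test_vector_form m e_sym e_irr e_reg e_a1 neq_x0y0 nadj_x0y0).
rewrite pmulr_rge0 ?ltr0n ?(leq_trans _ m_ge2) // subr_ge0 ler_nat => kc_le.
have k_gt0 : (0 < k)%N by rewrite (leq_trans _ k_ge2).
rewrite -(ltn_pmul2l k_gt0) (leq_trans _ kc_le) // -addn1 leq_add2l.
by rewrite muln_gt0 c_gt0.
Qed.
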